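(* If $\Delta;\Gamma\vdash M:A$, $\Delta;\Gamma\vdash N:A$ and $\Delta\vdash M\equiv N$ in DCC, then $\vdash M^\circ\equiv N^\circ$ in CC.
   Context: DCC: expressions $x\mid U_i\mid\Pi x{:}A.B\mid L@M\mid\ell_i\{\overline M\}$; label contexts $\Delta::=\cdot\mid\Delta,\ell_i(\{\overline x{:}\overline A\},x{:}A\mapsto L:B)$; substitution with $\ell\{\overline M\}[N/x]=\ell\{\overline{M[N/x]}\}$; reduction $\Delta\vdash\ell\{\overline M\}@N\triangleright L[\overline M/\overline x,N/x]$ when $\ell(\{\overline x{:}\overline A\},x{:}A\mapsto L:B)\in\Delta$; equivalence $\Delta\vdash M\equiv N$: common reduct, or $\Delta\vdash L\triangleright^*\ell\{\overline N\}$, $\Delta\vdash M\triangleright^*M'$, $\ell(\{\overline x{:}\overline A\},x{:}A\mapsto N:B)\in\Delta$, $\Delta\vdash N[\overline N/\overline x]\equiv M'@x$ give $\Delta\vdash L\equiv M$, and symmetrically; typing $\Delta;\Gamma\vdash M:A$ by CC-style rules for variables, $U_i:U_{i+1}$, $\Pi$, application $M@N:B[N/x]$, conversion, plus: if $\Delta;\Gamma$ well formed, $\ell(\{\overline x{:}\overline A\},x{:}A\mapsto M:B)\in\Delta$, $|\overline M|=|\overline x|$, $\Delta;\Gamma\vdash M_k:A_k[M_1/x_1,\dots,M_{k-1}/x_{k-1}]$ for all $k$, then $\Delta;\Gamma\vdash\ell\{\overline M\}:\Pi x{:}A[\overline M/\overline x].B[\overline M/\overline x]$. CC: expressions $x\mid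 U_i\mid\Pi x{:}A.B\mid L\,M\mid\lambda x{:}A.M$; reduction $(\lambda x{:}A.N)\,M\triangleright N[M/x]$; $\vdash M\equiv N$: common reduct, or $L\triangleright^*\lambda x{:}A.L'$, $M\triangleright^*M'$, $\vdash L'\equiv M'\,x$ give $\vdash L\equiv M$, and symmetrically. Backward transformation (relative to $\Delta$, on well-typed terms): $x^\circ=x$, $U_i^\circ=U_i$, $(\Pi x{:}A.B)^\circ=\Pi x{:}A^\circ.B^\circ$, $(M@N)^\circ=M^\circ\,N^\circ$, $(\ell\{\overline M\})^\circ=\lambda x{:}A^\circ[\overline{M^\circ}/\overline x].\,L^\circ[\overline{M^\circ}/\overline x]$ where $\ell(\{\overline x{:}\overline A\},x{:}A\mapsto L:B)\in\Delta$. *)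

(* Syntax with de Bruijn indices (variable 0 = innermost binder). *)
From Stdlib Require Import List Arith Relations.
Import ListNotations.

Inductive dterm : Type :=
| dvar  : nat -> dterm
| dsort : nat -> dterm
| dpi   : dterm -> dterm -> dterm            (* Pi x:A.B, B under one binder *)
| dapp  : dterm -> dterm -> dterm
| dlab  : nat -> list dterm -> dterm.        (* l_i { M_1 ... M_n } *)

Fixpoint dren (xi : nat -> nat) (t : dterm) : dterm :=
  match t with
  | dvar n => dvar (xi n)
  | dsort i => dsort i
  | dpi A B => dpi (dren xi A) (dren (fun n => match n with 0 => 0 | S n => S (xi n) end) B)
  | dapp M N => dapp (dren xi M) (dren xi N)
  | dlab l Ms => dlab l (map (dren xi) Ms)
  end.

Definition dup (s : nat -> dterm) : nat -> dterm :=
  fun n => match n with 0 => dvar 0 | S n => dren S (s n) end.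

(* parallel substitution; label bodies live in Delta, so l{Ms}[s] = l{Ms[s]} *)
Fixpoint dsubst (s : nat -> dterm) (t : dterm) : dterm :=
  match t with
  | dvar n => s n
  | dsort i => dsort i
  | dpi A B => dpi (dsubst s A) (dsubst (dup s) B)
  | dapp M N => dapp (dsubst s M) (dsubst s N)
  | dlab l Ms => dlab l (map (dsubst s) Ms)
  end.

Definition dscons (N : dterm) (s : nat -> dterm) : nat -> dterm :=
  fun n => match n with 0 => N | S n => s n end.

Definition dsubst1 (B N : dterm) : dterm := dsubst (dscons N dvar) B.

(* the substitution [M_1/x_1, ..., M_n/x_n] for a body living in context
   x_1, ..., x_n (x_n is de Bruijn index 0) *)
Definition dinst (Ms : list dterm) : nat -> dterm :=
  fun i => if i <? length Ms then nth (length Ms - 1 - i) Ms (dvar 0)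
           else dvar (i - length Ms).

(* A label definition  l({x_1:A_1,...,x_n:A_n}, x:A |-> L : B).
   le_args = [A_1; ...; A_n], A_k lives in context x_1..x_(k-1);
   le_dom = A lives in x_1..x_n; le_body = L and le_cod = B live in x_1..x_n,x. *)
Record lentry := LEntry {
  le_lab  : nat;
  le_args : list dterm;
  le_dom  : dterm;
  le_body : dterm;
  le_cod  : dterm }.

(* Label contexts; the head of the list is the most recently added entry:
   Delta, l(...)  is  (l(...) :: Delta). *)
Definition lctx := list lentry.

Fixpoint lookup (l : nat) (D : lctx) : option (lentry * lctx) :=
  match D with
  | [] => None
  | e :: D' => if Nat.eqb (le_lab e) l then Some (e, D') else lookup l D'
  end.

Definition in_lctx (e : lentry) (D : lctx) : Prop :=
  exists D', lookup (le_lab e) D = Some (e, D').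

Inductive dstep (D : lctx) : dterm -> dterm -> Prop :=
| dstep_beta : forall e Ms N,
    in_lctx e D -> length Ms = length (le_args e) ->
    dstep D (dapp (dlab (le_lab e) Ms) N) (dsubst (dscons N (dinst Ms)) (le_body e))
| dstep_pi1 : forall A A' B, dstep D A A' -> dstep D (dpi A B) (dpi A' B)
| dstep_pi2 : forall A B B', dstep D B B' -> dstep D (dpi A B) (dpi A B')
| dstep_app1 : forall M M' N, dstep D M M' -> dstep D (dapp M N) (dapp M' N)
| dstep_app2 : forall M N N', dstep D N N' -> dstep D (dapp M N) (dapp M N')
| dstep_lab : forall l Ms1 M M' Ms2, dstep D M M' ->
    dstep D (dlab l (Ms1 ++ M :: Ms2)) (dlab l (Ms1 ++ M' :: Ms2)).

Definition dred (D : lctx) : dterm -> dterm -> Prop := clos_refl_trans _ (dstep D).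

Inductive deq (D : lctx) : dterm -> dterm -> Prop :=
| deq_red : forall M N P, dred D M P -> dred D N P -> deq D M N
| deq_eta1 : forall L M M' e Ns,
    dred D L (dlab (le_lab e) Ns) -> dred D M M' -> in_lctx e D ->
    length Ns = length (le_args e) ->
    deq D (dsubst (dup (dinst Ns)) (le_body e)) (dapp (dren S M') (dvar 0)) ->
    deq D L M
| deq_eta2 : forall L M M' e Ns,
    dred D L (dlab (le_lab e) Ns) -> dred D M M' -> in_lctx e D ->
    length Ns = length (le_args e) ->
    deq D (dapp (dren S M') (dvar 0)) (dsubst (dup (dinst Ns)) (le_body e)) ->
    deq D M L.

(* typing contexts: head = type of variable 0; each type lives in the tail *)
Definition dctx := list dterm.

Inductive lwf : lctx -> Prop :=
| lwf_nil : lwf []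
| lwf_cons : forall D e,
    lookup (le_lab e) D = None ->
    typ D (le_dom e :: rev (le_args e)) (le_body e) (le_cod e) ->
    lwf (e :: D)
with cwf : lctx -> dctx -> Prop :=
| cwf_nil : forall D, lwf D -> cwf D []
| cwf_cons : forall D G A i, typ D G A (dsort i) -> cwf D (A :: G)
with typ : lctx -> dctx -> dterm -> dterm -> Prop :=
| typ_var : forall D G n A,
    cwf D G -> nth_error G n = Some A -> typ D G (dvar n) (dren (fun k => S n + k) A)
| typ_sort : forall D G i, cwf D G -> typ D G (dsort i) (dsort (S i))
| typ_pi : forall D G A B i j,
    typ D G A (dsort i) -> typ D (A :: G) B (dsort j) ->
    typ D G (dpi A B) (dsort (Nat.max i j))
| typ_app : forall D G M N A B,
    typ D G M (dpi A B) -> typ D G N A -> typ D G (dapp M N) (dsubst1 B N)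
| typ_conv : forall D G M A B i,
    typ D G M A -> typ D G B (dsort i) -> deq D A B -> typ D G M B
| typ_lab : forall D G e Ms,
    cwf D G -> in_lctx e D -> length Ms = length (le_args e) ->
    (forall k, k < length Ms ->
       typ D G (nth k Ms (dvar 0))
           (dsubst (dinst (firstn k Ms)) (nth k (le_args e) (dvar 0)))) ->
    typ D G (dlab (le_lab e) Ms)
        (dpi (dsubst (dinst Ms) (le_dom e)) (dsubst (dup (dinst Ms)) (le_cod e))).

Inductive cterm : Type :=
| cvar  : nat -> cterm
| csort : nat -> cterm
| cpi   : cterm -> cterm -> cterm
| capp  : cterm -> cterm -> cterm
| clam  : cterm -> cterm -> cterm.           (* lambda x:A. M, M under one binder *)

Fixpoint cren (xi : nat -> nat) (t : cterm) : cterm :=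
  match t with
  | cvar n => cvar (xi n)
  | csort i => csort i
  | cpi A B => cpi (cren xi A) (cren (fun n => match n with 0 => 0 | S n => S (xi n) end) B)
  | capp M N => capp (cren xi M) (cren xi N)
  | clam A M => clam (cren xi A) (cren (fun n => match n with 0 => 0 | S n => S (xi n) end) M)
  end.

Definition cup (s : nat -> cterm) : nat -> cterm :=
  fun n => match n with 0 => cvar 0 | S n => cren S (s n) end.

Fixpoint csubst (s : nat -> cterm) (t : cterm) : cterm :=
  match t with
  | cvar n => s n
  | csort i => csort i
  | cpi A B => cpi (csubst s A) (csubst (cup s) B)
  | capp M N => capp (csubst s M) (csubst s N)
  | clam A M => clam (csubst s A) (csubst (cup s) M)
  end.

Definition cscons (N : cterm) (s : nat -> cterm) : nat -> cterm :=
  fun n => match n with 0 => N | S n => s n end.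

Definition cinst (Ms : list cterm) : nat -> cterm :=
  fun i => if i <? length Ms then nth (length Ms - 1 - i) Ms (cvar 0)
           else cvar (i - length Ms).

Inductive cstep : cterm -> cterm -> Prop :=
| cstep_beta : forall A N M, cstep (capp (clam A N) M) (csubst (cscons M cvar) N)
| cstep_pi1 : forall A A' B, cstep A A' -> cstep (cpi A B) (cpi A' B)
| cstep_pi2 : forall A B B', cstep B B' -> cstep (cpi A B) (cpi A B')
| cstep_app1 : forall M M' N, cstep M M' -> cstep (capp M N) (capp M' N)
| cstep_app2 : forall M N N', cstep N N' -> cstep (capp M N) (capp M N')
| cstep_lam1 : forall A A' M, cstep A A' -> cstep (clam A M) (clam A' M)
| cstep_lam2 : forall A M M', cstep M M' -> cstep (clam A M) (clam A M').

Definition cred : cterm -> cterm -> Prop := clos_refl_trans _ cstep.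

Inductive ceq : cterm -> cterm -> Prop :=
| ceq_red : forall M N P, cred M P -> cred N P -> ceq M N
| ceq_eta1 : forall L L' A M M',
    cred L (clam A L') -> cred M M' -> ceq L' (capp (cren S M') (cvar 0)) -> ceq L M
| ceq_eta2 : forall L L' A M M',
    cred L (clam A L') -> cred M M' -> ceq (capp (cren S M') (cvar 0)) L' -> ceq M L.

(* (l{Ms})° = lambda x : A°[Ms°/xs]. L°[Ms°/xs]; the label body is transformed
   relative to the label context preceding the label (which is all it can mention
   in a well-formed Delta).  [fuel] only serves to make the definition structural. *)
Fixpoint back_fuel (fuel : nat) (D : lctx) {struct fuel} : dterm -> cterm :=
  fix go (M : dterm) : cterm :=
    match M with
    | dvar n => cvar n
    | dsort i => csort i
    | dpi A B => cpi (go A) (go B)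
    | dapp M N => capp (go M) (go N)
    | dlab l Ms =>
        match fuel with
        | 0 => csort 0
        | S f =>
          match lookup l D with
          | None => csort 0
          | Some (e, D') =>
              let s := cinst (map go Ms) in
              clam (csubst s (back_fuel f D' (le_dom e)))
                   (csubst (cup s) (back_fuel f D' (le_body e)))
          end
        end
    end.

Definition back (D : lctx) (M : dterm) : cterm := back_fuel (length D) D M.

(* The backward transformation commutes with renaming and substitution, so a
   DCC step  l{Ms} @ N |> L[Ms/xs, N/x]  is simulated by the single CC beta
   step of  (lambda x. L°[Ms°/xs]) N°, and the congruence steps by congruence.
   The eta rules of DCC are mapped to the eta rules of CC because (l{Ns})° is
   a lambda whose body is the transform of the instantiated label body.
   Commuting with substitution needs two invariants of well-typed terms over a
   well-formed label context: labels are applied to as many arguments as they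
   declare, and transformed label bodies only mention their parameters. *)

From Stdlib Require Import List Arith Lia Relations.
Import ListNotations.

Definition upren (xi : nat -> nat) : nat -> nat :=
  fun n => match n with 0 => 0 | S n => S (xi n) end.

Lemma cren_ext t xi zeta : (forall i, xi i = zeta i) -> cren xi t = cren zeta t.
Proof.
  revert xi zeta; induction t; intros xi zeta H; simpl; f_equal; auto;
    apply IHt2; intros [|i]; simpl; auto.
Qed.

Lemma csubst_ext t s r : (forall i, s i = r i) -> csubst s t = csubst r t.
Proof.
  revert s r; induction t; intros s r H; simpl; f_equal; auto;
    apply IHt2; intros [|i]; unfold cup; simpl; f_equal; auto.
Qed.

Lemma cren_cren t xi zeta : cren xi (cren zeta t) = cren (fun i => xi (zeta i)) t.
Proof.
  revert xi zeta; induction t; intros xi zeta; simpl; f_equal; auto;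
    rewrite IHt2; apply cren_ext; intros [|i]; reflexivity.
Qed.

Lemma cren_csubst t xi s : cren xi (csubst s t) = csubst (fun i => cren xi (s i)) t.
Proof.
  revert xi s; induction t; intros xi s; simpl; f_equal; auto;
    rewrite IHt2; apply csubst_ext; intros [|i]; unfold cup; simpl; auto;
    rewrite !cren_cren; apply cren_ext; reflexivity.
Qed.

Lemma csubst_cren t xi s : csubst s (cren xi t) = csubst (fun i => s (xi i)) t.
Proof.
  revert xi s; induction t; intros xi s; simpl; f_equal; auto;
    rewrite IHt2; apply csubst_ext; intros [|i]; reflexivity.
Qed.

Lemma csubst_csubst t s r :
  csubst r (csubst s t) = csubst (fun i => csubst r (s i)) t.
Proof.
  revert s r; induction t; intros s r; simpl; f_equal; auto;
    rewrite IHt2; apply csubst_ext; intros [|i]; unfold cup; simpl; auto;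
    rewrite csubst_cren, cren_csubst; apply csubst_ext; reflexivity.
Qed.

Lemma cren_as_csubst t xi : cren xi t = csubst (fun i => cvar (xi i)) t.
Proof.
  revert xi; induction t; intros xi; simpl; f_equal; auto;
    rewrite IHt2; apply csubst_ext; intros [|i]; reflexivity.
Qed.

Lemma csubst_var t : csubst cvar t = t.
Proof.
  induction t; simpl; f_equal; auto;
    rewrite <- IHt2 at 2; apply csubst_ext; intros [|i]; reflexivity.
Qed.

Lemma csubst_cup_cren_S s t : csubst (cup s) (cren S t) = cren S (csubst s t).
Proof. rewrite csubst_cren, cren_csubst. apply csubst_ext. reflexivity. Qed.

Fixpoint cclosed (n : nat) (t : cterm) : Prop :=
  match t with
  | cvar i => i < n
  | csort _ => True
  | cpi A B => cclosed n A /\ cclosed (S n) B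
  | capp M N => cclosed n M /\ cclosed n N
  | clam A M => cclosed n A /\ cclosed (S n) M
  end.

Lemma csubst_ext_closed t k s r :
  cclosed k t -> (forall i, i < k -> s i = r i) -> csubst s t = csubst r t.
Proof.
  revert k s r; induction t; intros k s r Ht H; simpl in *; try f_equal; intuition eauto;
    (eapply IHt2; [eassumption|]); intros [|i] Hi; unfold cup; simpl; auto;
    f_equal; apply H; lia.
Qed.

Lemma cclosed_cren t k m xi :
  cclosed k t -> (forall i, i < k -> xi i < m) -> cclosed m (cren xi t).
Proof.
  assert (Hup : forall k m xi, (forall i, i < k -> xi i < m) ->
                forall i, i < S k -> upren xi i < S m)
    by (intros k' m' xi' H [|i] Hi; simpl; [lia | specialize (H i); lia]).
  revert k m xi; induction t; intros k m xi Ht H; simpl in *; auto;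
    destruct Ht; split; eauto; eapply IHt2; eauto.
Qed.

Lemma cclosed_csubst t k m s :
  cclosed k t -> (forall i, i < k -> cclosed m (s i)) -> cclosed m (csubst s t).
Proof.
  assert (Hup : forall k m s, (forall i, i < k -> cclosed m (s i)) ->
                forall i, i < S k -> cclosed (S m) (cup s i)).
  { intros k' m' s' H [|i] Hi; simpl; [lia|].
    eapply cclosed_cren; [apply H; lia | intros; lia]. }
  revert k m s; induction t; intros k m s Ht H; simpl in *; auto;
    destruct Ht; split; eauto; eapply IHt2; eauto.
Qed.

Lemma cinst_map f Ls i : i < length Ls -> f (cinst Ls i) = cinst (map f Ls) i.
Proof.
  intros Hi. unfold cinst. rewrite length_map.
  destruct (Nat.ltb_spec i (length Ls)); [|lia].
  rewrite (nth_indep (map f Ls) (cvar 0) (f (cvar 0))) by (rewrite length_map; lia).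
  symmetry; apply map_nth.
Qed.

Lemma cclosed_cinst Ls m i :
  (forall k, k < length Ls -> cclosed m (nth k Ls (cvar 0))) ->
  i < length Ls -> cclosed m (cinst Ls i).
Proof.
  intros H Hi. unfold cinst. destruct (Nat.ltb_spec i (length Ls)); [|lia].
  apply H. lia.
Qed.

Lemma csubst_cinst X n Ls r :
  cclosed n X -> n <= length Ls ->
  csubst r (csubst (cinst Ls) X) = csubst (cinst (map (csubst r) Ls)) X.
Proof.
  intros HX Hn. rewrite csubst_csubst. eapply csubst_ext_closed; [eassumption|].
  intros i Hi. apply cinst_map. lia.
Qed.

Lemma csubst_cup_cinst Y n Ls r :
  cclosed (S n) Y -> n <= length Ls ->
  csubst (cup r) (csubst (cup (cinst Ls)) Y) = csubst (cup (cinst (map (csubst r) Ls))) Y.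
Proof.
  intros HY Hn. rewrite csubst_csubst. eapply csubst_ext_closed; [eassumption|].
  intros [|i] Hi; [reflexivity|]. unfold cup at 2 3.
  rewrite csubst_cup_cren_S. f_equal. apply cinst_map. lia.
Qed.

Lemma cstep_cren x y xi : cstep x y -> cstep (cren xi x) (cren xi y).
Proof.
  intros H; revert xi; induction H; intros xi; simpl; try (constructor; auto; fail).
  replace (cren xi (csubst (cscons M cvar) N))
    with (csubst (cscons (cren xi M) cvar) (cren (upren xi) N))
    by (rewrite csubst_cren, cren_csubst; apply csubst_ext; intros [|i]; reflexivity).
  apply cstep_beta.
Qed.

Lemma cred_map (f : cterm -> cterm) x y :
  (forall x y, cstep x y -> cstep (f x) (f y)) -> cred x y -> cred (f x) (f y).
Proof.
  intros Hf H. induction H.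
  - apply rt_step; auto.
  - apply rt_refl.
  - eapply rt_trans; eauto.
Qed.

Lemma cred_cren xi x y : cred x y -> cred (cren xi x) (cren xi y).
Proof. apply cred_map. intros; apply cstep_cren; auto. Qed.

Lemma cred_pi A A' B B' : cred A A' -> cred B B' -> cred (cpi A B) (cpi A' B').
Proof.
  intros HA HB. apply rt_trans with (cpi A' B).
  - apply (cred_map (fun x => cpi x B)); [intros; constructor|]; auto.
  - apply (cred_map (fun x => cpi A' x)); [intros; constructor|]; auto.
Qed.

Lemma cred_app A A' B B' : cred A A' -> cred B B' -> cred (capp A B) (capp A' B').
Proof.
  intros HA HB. apply rt_trans with (capp A' B).
  - apply (cred_map (fun x => capp x B)); [intros; constructor|]; auto.
  - apply (cred_map (fun x => capp A' x)); [intros; constructor|]; auto.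
Qed.

Lemma cred_lam A A' B B' : cred A A' -> cred B B' -> cred (clam A B) (clam A' B').
Proof.
  intros HA HB. apply rt_trans with (clam A' B).
  - apply (cred_map (fun x => clam x B)); [intros; constructor|]; auto.
  - apply (cred_map (fun x => clam A' x)); [intros; constructor|]; auto.
Qed.

Lemma cred_csubst t s r : (forall i, cred (s i) (r i)) -> cred (csubst s t) (csubst r t).
Proof.
  revert s r; induction t; intros s r H; simpl.
  - apply H.
  - apply rt_refl.
  - apply cred_pi; auto. apply IHt2. intros [|i]; [apply rt_refl | apply cred_cren; auto].
  - apply cred_app; auto.
  - apply cred_lam; auto. apply IHt2. intros [|i]; [apply rt_refl | apply cred_cren; auto].
Qed.

Lemma Forall2_cred_refl Ls : Forall2 cred Ls Ls.
Proof. induction Ls; constructor; [apply rt_refl | assumption]. Qed.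

Lemma cred_cinst Ls Ls' i : Forall2 cred Ls Ls' -> cred (cinst Ls i) (cinst Ls' i).
Proof.
  intros H. unfold cinst. rewrite (Forall2_length H).
  destruct (i <? length Ls'); [|apply rt_refl].
  generalize (length Ls' - 1 - i).
  induction H; intros [|k]; simpl; auto; apply rt_refl.
Qed.

(** * Unfolding the backward transformation *)

Definition dterm_nested_ind (P : dterm -> Prop)
  (Hv : forall n, P (dvar n)) (Hs : forall i, P (dsort i))
  (Hp : forall A B, P A -> P B -> P (dpi A B))
  (Ha : forall M N, P M -> P N -> P (dapp M N))
  (Hl : forall l Ms, Forall P Ms -> P (dlab l Ms)) : forall t, P t :=
  fix F t := match t with
  | dvar n => Hv n
  | dsort i => Hs i
  | dpi A B => Hp A B (F A) (F B)
  | dapp M N => Ha M N (F M) (F N)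
  | dlab l Ms => Hl l Ms ((fix G Ms := match Ms return Forall P Ms with
       | [] => Forall_nil _
       | M :: Ms => Forall_cons _ (F M) (G Ms) end) Ms)
  end.

Lemma map_ext_Forall {A B} (f g : A -> B) l :
  Forall (fun x => f x = g x) l -> map f l = map g l.
Proof. induction 1; simpl; f_equal; auto. Qed.

Lemma lookup_shorter l D e D' : lookup l D = Some (e, D') -> length D' < length D.
Proof.
  revert D'; induction D as [|e0 D IH]; simpl; intros D' H; [discriminate|].
  destruct (Nat.eqb (le_lab e0) l); [injection H as <- <-; lia|].
  apply IH in H. lia.
Qed.

Lemma back_fuel_var f D n : back_fuel f D (dvar n) = cvar n.
Proof. destruct f; reflexivity. Qed.

Lemma back_fuel_sort f D i : back_fuel f D (dsort i) = csort i.
Proof. destruct f; reflexivity. Qed.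

Lemma back_fuel_pi f D A B :
  back_fuel f D (dpi A B) = cpi (back_fuel f D A) (back_fuel f D B).
Proof. destruct f; reflexivity. Qed.

Lemma back_fuel_app f D M N :
  back_fuel f D (dapp M N) = capp (back_fuel f D M) (back_fuel f D N).
Proof. destruct f; reflexivity. Qed.

Lemma back_fuel_lab f D l Ms : back_fuel (S f) D (dlab l Ms) =
  match lookup l D with
  | None => csort 0
  | Some (e, D') =>
      clam (csubst (cinst (map (back_fuel (S f) D) Ms)) (back_fuel f D' (le_dom e)))
           (csubst (cup (cinst (map (back_fuel (S f) D) Ms))) (back_fuel f D' (le_body e)))
  end.
Proof. reflexivity. Qed.

Lemma back_fuel_irrelevant f g D t :
  length D <= f -> length D <= g -> back_fuel f D t = back_fuel g D t.
Proof.
  revert g D t; induction f as [|f IHf]; intros g D t Hf Hg;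
    induction t as [n|i|A B IHA IHB|M N IHM IHN|l Ms IHMs] using dterm_nested_ind;
    rewrite ?back_fuel_var, ?back_fuel_sort, ?back_fuel_pi, ?back_fuel_app; try congruence.
  - destruct D; simpl in Hf; [|lia]. destruct g; reflexivity.
  - destruct g as [|g].
    + destruct D; simpl in Hg; [|lia]. reflexivity.
    + rewrite !back_fuel_lab. destruct (lookup l D) as [[e D']|] eqn:E; [|reflexivity].
      apply lookup_shorter in E.
      rewrite (map_ext_Forall _ _ _ IHMs), (IHf g D' (le_dom e)), (IHf g D' (le_body e)) by lia.
      reflexivity.
Qed.

Lemma back_var D n : back D (dvar n) = cvar n.
Proof. apply back_fuel_var. Qed.

Lemma back_sort D i : back D (dsort i) = csort i.
Proof. apply back_fuel_sort. Qed.

Lemma back_pi D A B : back D (dpi A B) = cpi (back D A) (back D B).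
Proof. apply back_fuel_pi. Qed.

Lemma back_app D M N : back D (dapp M N) = capp (back D M) (back D N).
Proof. apply back_fuel_app. Qed.

Lemma back_lab D l Ms : back D (dlab l Ms) =
  match lookup l D with
  | None => csort 0
  | Some (e, D') =>
      clam (csubst (cinst (map (back D) Ms)) (back D' (le_dom e)))
           (csubst (cup (cinst (map (back D) Ms))) (back D' (le_body e)))
  end.
Proof.
  unfold back at 1. destruct (lookup l D) as [[e D']|] eqn:E.
  - pose proof (lookup_shorter _ _ _ _ E) as Hlt.
    destruct (length D) as [|f] eqn:L; [lia|].
    rewrite back_fuel_lab, E. unfold back. rewrite L.
    rewrite !(back_fuel_irrelevant f (length D')) by lia. reflexivity.
  - destruct (length D); [reflexivity|]. rewrite back_fuel_lab, E. reflexivity.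
Qed.

Lemma back_dinst D Ms j : back D (dinst Ms j) = cinst (map (back D) Ms) j.
Proof.
  unfold dinst, cinst. rewrite length_map. destruct (j <? length Ms).
  - rewrite <- (back_var D 0), map_nth. reflexivity.
  - apply back_var.
Qed.

(** * Well-labelled terms *)

Inductive labelled (D : lctx) : dterm -> Prop :=
| labelled_var n : labelled D (dvar n)
| labelled_sort i : labelled D (dsort i)
| labelled_pi A B : labelled D A -> labelled D B -> labelled D (dpi A B)
| labelled_app M N : labelled D M -> labelled D N -> labelled D (dapp M N)
| labelled_lab l e D' Ms :
    lookup l D = Some (e, D') -> length Ms = length (le_args e) ->
    Forall (labelled D) Ms -> labelled D (dlab l Ms).

Lemma labelled_dren D t xi : labelled D t -> labelled D (dren xi t).
Proof.
  revert xi; induction t as [n|i|A B IHA IHB|M N IHM IHN|l Ms IHMs] using dterm_nested_ind;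
    intros xi Ht; inversion Ht as [| | | |? e D' ? E L HMs]; subst; simpl;
    econstructor; eauto.
  - rewrite length_map. exact L.
  - rewrite Forall_map. rewrite Forall_forall in *. auto.
Qed.

Lemma labelled_dsubst D t s :
  labelled D t -> (forall i, labelled D (s i)) -> labelled D (dsubst s t).
Proof.
  revert s; induction t as [n|i|A B IHA IHB|M N IHM IHN|l Ms IHMs] using dterm_nested_ind;
    intros s Ht Hs; inversion Ht as [| | | |? e D' ? E L HMs]; subst; simpl;
    try econstructor; eauto.
  - apply IHB; auto. intros [|i]; simpl; [constructor | apply labelled_dren; auto].
  - rewrite length_map. exact L.
  - rewrite Forall_map. rewrite Forall_forall in *. auto.
Qed.

Lemma labelled_dinst D Ms j : Forall (labelled D) Ms -> labelled D (dinst Ms j).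
Proof.
  intros H. unfold dinst. destruct (j <? length Ms); [|constructor].
  generalize (length Ms - 1 - j).
  induction H; intros [|k]; simpl; auto; constructor.
Qed.

Lemma labelled_dup_dinst D Ms i : Forall (labelled D) Ms -> labelled D (dup (dinst Ms) i).
Proof.
  intros H. destruct i; simpl; [constructor | apply labelled_dren, labelled_dinst; auto].
Qed.

Lemma labelled_dscons_dinst D N Ms i :
  labelled D N -> Forall (labelled D) Ms -> labelled D (dscons N (dinst Ms) i).
Proof. intros HN HMs. destruct i; simpl; auto using labelled_dinst. Qed.

Lemma labelled_lab_inv D l Ms :
  labelled D (dlab l Ms) ->
  exists e D', lookup l D = Some (e, D') /\ length Ms = length (le_args e) /\
               Forall (labelled D) Ms.
Proof. intros H. inversion H; subst. eauto. Qed.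

(* [back] transforms a label body relative to the labels preceding it, whereas
   a reduct exposes the instantiated body to [back D]; the last clause
   reconciles the two. *)
Definition back_ok (D : lctx) : Prop :=
  forall l e D', lookup l D = Some (e, D') ->
    cclosed (length (le_args e)) (back D' (le_dom e)) /\
    cclosed (S (length (le_args e))) (back D' (le_body e)) /\
    labelled D (le_body e) /\
    back D' (le_body e) = back D (le_body e).

Section Simulation.

Variable D : lctx.
Hypothesis HD : back_ok D.

Lemma back_lab_map (f : dterm -> dterm) r l e D' Ms :
  lookup l D = Some (e, D') -> length Ms = length (le_args e) ->
  Forall (fun M => back D (f M) = csubst r (back D M)) Ms ->
  back D (dlab l (map f Ms)) = csubst r (back D (dlab l Ms)).
Proof.
  intros E L Hf. destruct (HD _ _ _ E) as (Cdom & Cbody & _).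
  rewrite !back_lab, E, map_map, (map_ext_Forall _ _ _ Hf), <- (map_map (back D)). simpl.
  rewrite (csubst_cinst _ _ _ _ Cdom), (csubst_cup_cinst _ _ _ _ Cbody)
    by (rewrite length_map; lia).
  reflexivity.
Qed.

Lemma back_dren t xi : labelled D t -> back D (dren xi t) = cren xi (back D t).
Proof.
  revert xi; induction t as [n|i|A B IHA IHB|M N IHM IHN|l Ms IHMs] using dterm_nested_ind;
    intros xi Ht; simpl dren.
  - rewrite !back_var. reflexivity.
  - rewrite !back_sort. reflexivity.
  - inversion Ht; subst. rewrite !back_pi, IHA, IHB by assumption. reflexivity.
  - inversion Ht; subst. rewrite !back_app, IHM, IHN by assumption. reflexivity.
  - apply labelled_lab_inv in Ht as (e & D' & E & L & HMs).
    rewrite cren_as_csubst. apply (back_lab_map _ _ _ _ _ _ E L).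
    rewrite Forall_forall in *. intros M HM.
    rewrite IHMs, cren_as_csubst by auto. reflexivity.
Qed.

Lemma back_dsubst t s :
  labelled D t -> (forall i, labelled D (s i)) ->
  back D (dsubst s t) = csubst (fun i => back D (s i)) (back D t).
Proof.
  revert s; induction t as [n|i|A B IHA IHB|M N IHM IHN|l Ms IHMs] using dterm_nested_ind;
    intros s Ht Hs; simpl dsubst.
  - rewrite back_var. reflexivity.
  - rewrite !back_sort. reflexivity.
  - inversion Ht; subst.
    rewrite !back_pi, IHA, IHB by first
      [ assumption | intros [|i]; simpl; [constructor | apply labelled_dren; auto] ].
    simpl. f_equal. apply csubst_ext. intros [|i]; unfold cup, dup; simpl.
    + apply back_var.
    + apply back_dren; auto.
  - inversion Ht; subst. rewrite !back_app, IHM, IHN by assumption. reflexivity.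
  - apply labelled_lab_inv in Ht as (e & D' & E & L & HMs).
    apply (back_lab_map _ _ _ _ _ _ E L).
    rewrite Forall_forall in *. auto.
Qed.

Lemma back_lab_lam e D' Ns :
  lookup (le_lab e) D = Some (e, D') -> Forall (labelled D) Ns ->
  exists A, back D (dlab (le_lab e) Ns)
            = clam A (back D (dsubst (dup (dinst Ns)) (le_body e))).
Proof.
  intros E HNs. destruct (HD _ _ _ E) as (_ & _ & Hbody & Hstable).
  rewrite back_lab, E, Hstable, back_dsubst by auto using labelled_dup_dinst.
  eexists. f_equal. apply csubst_ext. intros [|i]; simpl.
  - symmetry. apply back_var.
  - rewrite back_dren, back_dinst by (apply labelled_dinst; auto). reflexivity.
Qed.

Lemma back_beta e D' Ms N :
  lookup (le_lab e) D = Some (e, D') -> Forall (labelled D) Ms -> labelled D N ->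
  cred (back D (dapp (dlab (le_lab e) Ms) N))
       (back D (dsubst (dscons N (dinst Ms)) (le_body e))).
Proof.
  intros E HMs HN. destruct (HD _ _ _ E) as (_ & _ & Hbody & Hstable).
  rewrite back_app, back_lab, E, Hstable.
  eapply rt_trans; [apply rt_step, cstep_beta|].
  rewrite back_dsubst, csubst_csubst by auto using labelled_dscons_dinst.
  enough (Hsub : forall i, csubst (cscons (back D N) cvar) (cup (cinst (map (back D) Ms)) i)
                          = back D (dscons N (dinst Ms) i))
    by (rewrite (csubst_ext _ _ _ Hsub); apply rt_refl).
  intros [|i]; simpl; [reflexivity|].
  rewrite csubst_cren, back_dinst. apply csubst_var.
Qed.

Lemma labelled_dstep t t' : dstep D t t' -> labelled D t -> labelled D t'.
Proof.
  induction 1 as [e Ms N [D' E] _| | | | |l Ms1 M M' Ms2 _ IH]; intros Ht;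
    try (inversion Ht; subst; constructor; auto; fail).
  - inversion Ht as [| | | ? ? Hlab HN |]; subst.
    apply labelled_lab_inv in Hlab as (_ & _ & _ & _ & HMs).
    destruct (HD _ _ _ E) as (_ & _ & Hbody & _).
    apply labelled_dsubst; auto using labelled_dscons_dinst.
  - apply labelled_lab_inv in Ht as (e & D' & E & L & HMs).
    apply Forall_app in HMs as [HMs1 HMs2]. inversion HMs2; subst.
    econstructor; [exact E | rewrite length_app in *; simpl in *; lia |].
    apply Forall_app. split; auto.
Qed.

Lemma labelled_dred t t' : dred D t t' -> labelled D t -> labelled D t'.
Proof. induction 1; intros; eauto using labelled_dstep. Qed.

Lemma back_dstep t t' : dstep D t t' -> labelled D t -> cred (back D t) (back D t').
Proof.
  induction 1 as [e Ms N [D' E] _| | | | |l Ms1 M M' Ms2 _ IH]; intros Ht;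
    try (inversion Ht; subst; rewrite ?back_pi, ?back_app;
         first [apply cred_pi | apply cred_app]; auto; apply rt_refl).
  - inversion Ht as [| | | ? ? Hlab HN |]; subst.
    apply labelled_lab_inv in Hlab as (_ & _ & _ & _ & HMs).
    apply (back_beta _ _ _ _ E); auto.
  - apply labelled_lab_inv in Ht as (e & D' & E & _ & HMs).
    apply Forall_app in HMs as [_ HMs2]. inversion HMs2; subst.
    assert (Hargs : Forall2 cred (map (back D) (Ms1 ++ M :: Ms2))
                                 (map (back D) (Ms1 ++ M' :: Ms2))).
    { rewrite !map_app. apply Forall2_app; [apply Forall2_cred_refl|].
      constructor; [auto | apply Forall2_cred_refl]. }
    rewrite !back_lab, E.
    apply cred_lam; apply cred_csubst; [intros; apply cred_cinst; auto|].
    intros [|i]; simpl; [apply rt_refl | apply cred_cren, cred_cinst; auto].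
Qed.

Lemma back_dred t t' : dred D t t' -> labelled D t -> cred (back D t) (back D t').
Proof.
  induction 1 as [x y Hxy | x | x y z Hxy IHxy Hyz IHyz]; intros Hx.
  - apply back_dstep; auto.
  - apply rt_refl.
  - apply rt_trans with (back D y); [apply IHxy | apply IHyz, (labelled_dred x)]; auto.
Qed.

Lemma back_dred_lab L e Ns :
  dred D L (dlab (le_lab e) Ns) -> in_lctx e D -> labelled D L ->
  exists A, cred (back D L) (clam A (back D (dsubst (dup (dinst Ns)) (le_body e)))) /\
            labelled D (dsubst (dup (dinst Ns)) (le_body e)).
Proof.
  intros HL [D' E] Ht.
  pose proof (labelled_dred _ _ HL Ht) as Hlab.
  apply labelled_lab_inv in Hlab as (? & ? & _ & _ & HNs).
  destruct (back_lab_lam _ _ _ E HNs) as [A HA].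
  destruct (HD _ _ _ E) as (_ & _ & Hbody & _).
  exists A. rewrite <- HA.
  split; [apply back_dred; auto | apply labelled_dsubst; auto using labelled_dup_dinst].
Qed.

Lemma back_eta_arg M' : labelled D M' ->
  back D (dapp (dren S M') (dvar 0)) = capp (cren S (back D M')) (cvar 0).
Proof. intros H. rewrite back_app, back_var, back_dren; auto. Qed.

Lemma back_deq t t' : deq D t t' -> labelled D t -> labelled D t' -> ceq (back D t) (back D t').
Proof.
  induction 1 as [M N P HM HN | L M M' e Ns HL HM He _ _ IH | L M M' e Ns HL HM He _ _ IH];
    intros Ht Ht'.
  - apply ceq_red with (back D P); apply back_dred; eauto using labelled_dred.
  - destruct (back_dred_lab _ _ _ HL He Ht) as (A & HLA & Hbody).
    pose proof (labelled_dred _ _ HM Ht') as HM'.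
    eapply ceq_eta1; [exact HLA | apply back_dred; eauto |].
    rewrite <- back_eta_arg by auto. apply IH; auto.
    constructor; [apply labelled_dren; auto | constructor].
  - destruct (back_dred_lab _ _ _ HL He Ht') as (A & HLA & Hbody).
    pose proof (labelled_dred _ _ HM Ht) as HM'.
    eapply ceq_eta2; [exact HLA | apply back_dred; eauto |].
    rewrite <- back_eta_arg by auto. apply IH; auto.
    constructor; [apply labelled_dren; auto | constructor].
Qed.

End Simulation.

(** * Invariants of well-typed terms *)

Lemma typ_cwf D G t T : typ D G t T -> cwf D G.
Proof. induction 1; auto. Qed.

Lemma cwf_lwf D G : cwf D G -> lwf D.
Proof.
  revert D; induction G as [|A G IH]; intros D H;
    inversion H as [? HD | ? ? ? ? HA]; subst; auto.
  apply IH, (typ_cwf _ _ _ _ HA).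
Qed.

Lemma typ_labelled D G t T : typ D G t T -> labelled D t.
Proof.
  induction 1 as [| | | | |D G e Ms _ [D' E] L _ IH]; try (constructor; auto; fail); auto.
  econstructor; [exact E | exact L |].
  apply Forall_nth. intros k d Hk. rewrite nth_indep with (d' := dvar 0); auto.
Qed.

Lemma typ_back_closed D G t T : typ D G t T -> back_ok D -> cclosed (length G) (back D t).
Proof.
  induction 1 as [D G n A _ Hn| | | | |D G e Ms _ [D' E] L _ IH]; intros HD;
    rewrite ?back_var, ?back_sort, ?back_pi, ?back_app; simpl; auto.
  - apply nth_error_Some. congruence.
  - rewrite back_lab, E. destruct (HD _ _ _ E) as (Cdom & Cbody & _).
    assert (Hargs : forall i, i < length (le_args e) ->
                    cclosed (length G) (cinst (map (back D) Ms) i)).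
    { intros i Hi. apply cclosed_cinst; [|rewrite length_map; lia].
      intros k Hk. rewrite length_map in Hk.
      rewrite <- (back_var D 0), map_nth. auto. }
    simpl. split; [eapply cclosed_csubst; eauto|].
    eapply cclosed_csubst; [exact Cbody|].
    intros [|i] Hi; simpl; [lia|].
    eapply cclosed_cren; [apply Hargs; lia | intros; lia].
Qed.

Section FreshLabel.

Variables (e0 : lentry) (D : lctx).
Hypothesis Hfresh : lookup (le_lab e0) D = None.

Lemma lookup_fresh l x : lookup l D = Some x -> lookup l (e0 :: D) = Some x.
Proof.
  intros E. simpl. destruct (Nat.eqb_spec (le_lab e0) l); [congruence | exact E].
Qed.

Lemma labelled_fresh t : labelled D t -> labelled (e0 :: D) t.
Proof.
  induction t as [n|i|A B IHA IHB|M N IHM IHN|l Ms IHMs] using dterm_nested_ind;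
    intros Ht; inversion Ht; subst; econstructor; eauto using lookup_fresh.
  rewrite Forall_forall in *. auto.
Qed.

Lemma back_fresh t : labelled D t -> back (e0 :: D) t = back D t.
Proof.
  induction t as [n|i|A B IHA IHB|M N IHM IHN|l Ms IHMs] using dterm_nested_ind; intros Ht.
  - rewrite !back_var. reflexivity.
  - rewrite !back_sort. reflexivity.
  - inversion Ht; subst. rewrite !back_pi, IHA, IHB by assumption. reflexivity.
  - inversion Ht; subst. rewrite !back_app, IHM, IHN by assumption. reflexivity.
  - apply labelled_lab_inv in Ht as (e & D' & E & _ & HMs).
    rewrite !back_lab, (lookup_fresh _ _ E), E.
    rewrite (map_ext_Forall (back (e0 :: D)) (back D)); [reflexivity|].
    rewrite Forall_forall in *. auto.
Qed.

End FreshLabel.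

Lemma lwf_back_ok D : lwf D -> back_ok D.
Proof.
  induction D as [|e0 D IH]; intros H l e D' E; [discriminate|].
  inversion H as [|? ? Hfresh Hbody]; subst.
  assert (HD : back_ok D) by (apply IH, (cwf_lwf _ _ (typ_cwf _ _ _ _ Hbody))).
  simpl in E. destruct (Nat.eqb_spec (le_lab e0) l).
  - injection E as <- <-.
    pose proof (typ_cwf _ _ _ _ Hbody) as Hcwf.
    inversion Hcwf as [|? ? ? ? Hdom]; subst.
    pose proof (typ_back_closed _ _ _ _ Hdom HD) as Cdom.
    pose proof (typ_back_closed _ _ _ _ Hbody HD) as Cbody.
    simpl in Cdom, Cbody. rewrite length_rev in Cdom, Cbody.
    pose proof (typ_labelled _ _ _ _ Hbody) as Hlab.
    rewrite back_fresh by assumption. auto using labelled_fresh.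
  - destruct (HD _ _ _ E) as (Cdom & Cbody & Hlab & Hstable).
    rewrite back_fresh by assumption. auto using labelled_fresh.
Qed.

Theorem lemma3p21 (D : lctx) (G : dctx) (M N A : dterm) :
  typ D G M A -> typ D G N A -> deq D M N ->
  ceq (back D M) (back D N).
Proof.
  intros HM HN Heq.
  apply back_deq; eauto using typ_labelled.
  apply lwf_back_ok, (cwf_lwf _ G), (typ_cwf _ _ _ _ HM).
Qed.
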